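(* Let $A$ be a commutative ring with $1$, $M\in\operatorname{Sym}_n(A)$ and $a\in(\Sigma(M):A^n)$. Then $b^2\in(\Sigma(M):A^n)$ for every $b\in\Sigma(a)$.
   Context: $\Sigma A^2$ denotes the set of finite sums of squares in $A$. A matrix $N\in\operatorname{Sym}_n(A)$ is a sum of squares if $N=\sum_{i=1}^m w_iw_i^{t}$ for some column vectors $w_i\in A^n$. For $M\in\operatorname{Sym}_n(A)$, $\Sigma(M)$ is the set of $v\in A^n$ such that $sM=vv^{t}+N$ for some $s\in\Sigma A^2$ and some sum of squares $N\in\operatorname{Sym}_n(A)$; it is an $A$-submodule of $A^n$. For $n=1$: $b\in\Sigma(a)$ iff $sa=b^2+t$ for some $s,t\in\Sigma A^2$. $(\Sigma(M):A^n)=\{c\in A: cv\in\Sigma(M)\text{ for all }v\in A^n\}$. *)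

From HB Require Import structures.
From mathcomp Require Import all_boot all_order all_algebra.
Set Implicit Arguments. Unset Strict Implicit. Unset Printing Implicit Defensive.
Import GRing.Theory.
Local Open Scope ring_scope.

(* A commutative ring with 1 (possibly the zero ring): comPzRingType. *)

Definition sos_elt (A : comPzRingType) (x : A) : Prop :=
  exists s : seq A, x = \sum_(y <- s) y ^+ 2.

Definition sos_mx (A : comPzRingType) (n : nat) (N : 'M[A]_n) : Prop :=
  exists s : seq 'cV[A]_n, N = \sum_(w <- s) (w *m w^T).

Definition Sigma (A : comPzRingType) (n : nat) (M : 'M[A]_n) (v : 'cV[A]_n) : Prop :=
  exists (s : A) (N : 'M[A]_n), sos_elt s /\ sos_mx N /\ s *: M = v *m v^T + N.

(* n = 1 case: b in Sigma(a) iff s a = b^2 + t with s, t in SA^2. *)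
Definition Sigma1 (A : comPzRingType) (a b : A) : Prop :=
  exists s t : A, sos_elt s /\ sos_elt t /\ s * a = b ^+ 2 + t.

Definition Sigma_colon (A : comPzRingType) (n : nat) (M : 'M[A]_n) (c : A) : Prop :=
  forall v : 'cV[A]_n, Sigma M (c *: v).

From HB Require Import structures.
From mathcomp Require Import all_boot all_order all_algebra.
From mathcomp Require Import ring.
Import GRing.Theory.
Local Open Scope ring_scope.

(* If [s a = b^2 + t] with [t] a sum of squares, then [(a s)^2 = (b^2)^2 + t (2 b^2 + t)],
   so [(a s)^2 - (b^2)^2] is a sum of squares.  Since [a s v] lies in [Sigma(M)], the
   identity [((a s) v)((a s) v)^t = (b^2 v)(b^2 v)^t + ((a s)^2 - (b^2)^2) v v^t]
   exhibits [b^2 v] in [Sigma(M)] with the same multiplier. *)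

Section SumsOfSquares.

Context {A : comPzRingType}.

Lemma sos_elt_sqr (x : A) : sos_elt (x ^+ 2).
Proof. by exists [:: x]; rewrite big_seq1. Qed.

Lemma sos_eltD (x y : A) : sos_elt x -> sos_elt y -> sos_elt (x + y).
Proof. by move=> [s ->] [t ->]; exists (s ++ t); rewrite big_cat. Qed.

Lemma sos_eltM (x y : A) : sos_elt x -> sos_elt y -> sos_elt (x * y).
Proof.
move=> [s ->] [t ->]; exists [seq u * w | u <- s, w <- t].
rewrite big_allpairs_dep mulr_suml; apply: eq_bigr => u _.
by rewrite mulr_sumr; apply: eq_bigr => w _; rewrite exprMn.
Qed.

Context {n : nat}.

Lemma sos_mxD (N1 N2 : 'M[A]_n) : sos_mx N1 -> sos_mx N2 -> sos_mx (N1 + N2).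
Proof. by move=> [s1 ->] [s2 ->]; exists (s1 ++ s2); rewrite big_cat. Qed.

Lemma outer_scale (c : A) (v : 'cV[A]_n) :
  (c *: v) *m (c *: v)^T = c ^+ 2 *: (v *m v^T).
Proof. by rewrite linearZ /= -scalemxAl -scalemxAr scalerA expr2. Qed.

Lemma sos_mx_scale_outer (x : A) (v : 'cV[A]_n) :
  sos_elt x -> sos_mx (x *: (v *m v^T)).
Proof.
move=> [s ->]; exists [seq y *: v | y <- s].
by rewrite big_map scaler_suml; apply: eq_bigr => y _; rewrite outer_scale.
Qed.

Lemma Sigma_scale_sos_dominated {M : 'M[A]_n} {v : 'cV[A]_n} {c d x : A} :
  sos_elt x -> c ^+ 2 = d ^+ 2 + x -> Sigma M (c *: v) -> Sigma M (d *: v).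
Proof.
move=> hx hcd [s [N [hs [hN hsM]]]].
exists s, (x *: (v *m v^T) + N); split=> //; split.
  by apply: sos_mxD => //; apply: sos_mx_scale_outer.
by rewrite hsM !outer_scale hcd scalerDl addrA.
Qed.

End SumsOfSquares.

Theorem corollary3p10 (A : comPzRingType) (n : nat) (M : 'M[A]_n)
  (hM : M^T = M) (a : A) (ha : Sigma_colon M a) :
  forall b : A, Sigma1 a b -> Sigma_colon M (b ^+ 2).
Proof.
move=> b [s [t [_ [ht hsa]]]] v.
have hsq : (a * s) ^+ 2 = (b ^+ 2) ^+ 2 + t * (b ^+ 2 *+ 2 + t).
  by rewrite mulrC hsa; ring.
have hdiff : sos_elt (t * (b ^+ 2 *+ 2 + t)).
  by apply: sos_eltM => //; apply: sos_eltD => //; rewrite mulr2n;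
     apply: sos_eltD; apply: sos_elt_sqr.
apply: (Sigma_scale_sos_dominated hdiff hsq).
rewrite -scalerA; exact: ha.
Qed.
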